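(* Let $t\geq 3$ and $m\geq t$ be integers and let $q$ be a prime power with $q\geq 4t-5$. Then there exists an MS$(q^{m},t)$.
   Context: An $n\times n$ integer matrix $A=(a_{i,j})$ is a general magic square if the sums of the entries in each row, each column, the main diagonal $\{a_{i,i}\}$ and the back diagonal $\{a_{i,n-1-i}\}$ are all equal. For a positive integer $t$, a general magic square $M=(m_{i,j})$ is a general $t$-multimagic square if for every $e=1,\dots,t$ the entrywise power $M^{*e}=(m_{i,j}^{e})$ is a general magic square. A general $t$-multimagic square of order $n$ whose entries are $n^2$ consecutive integers is denoted MS$(n,t)$. *)

From HB Require Import structures.
From mathcomp Require Import all_boot all_order all_algebra.
Set Implicit Arguments. Unset Strict Implicit. Unset Printing Implicit Defensive.
Import Order.TTheory GRing.Theory Num.Theory.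
Local Open Scope ring_scope.

Definition back_diag_index (n : nat) (i : 'I_n) : 'I_n := rev_ord i.

Definition is_general_magic (n : nat) (A : 'M[int]_n) : Prop :=
  exists s : int,
    (forall i : 'I_n, \sum_(j < n) A i j = s) /\
    (forall j : 'I_n, \sum_(i < n) A i j = s) /\
    (\sum_(i < n) A i i = s) /\
    (\sum_(i < n) A i (back_diag_index i) = s).

Definition entrywise_pow (n : nat) (M : 'M[int]_n) (e : nat) : 'M[int]_n :=
  \matrix_(i, j) (M i j ^+ e).

Definition is_general_multimagic (n t : nat) (M : 'M[int]_n) : Prop :=
  forall e : nat, (1 <= e <= t)%N -> is_general_magic (entrywise_pow M e).

Definition consecutive_entries (n : nat) (M : 'M[int]_n) : Prop :=
  exists a : int,
    forall k : nat, (k < n ^ 2)%N ->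
      exists! ij : 'I_n * 'I_n, M ij.1 ij.2 = a + k%:Z.

Definition MS (n t : nat) (M : 'M[int]_n) : Prop :=
  is_general_multimagic t M /\ consecutive_entries M.

Definition prime_power (q : nat) : Prop :=
  exists p k : nat, prime p /\ (0 < k)%N /\ q = (p ^ k)%N.

(* Let F be a field with q >= 4t - 5 elements.  Columns of Vandermonde type at the
   points of F, each point occurring at most twice, form a (t+u) x 2(t+u) matrix any t
   columns of which are independent; stacking such blocks block-diagonally gives a linear
   map C : F^m -> F^(2m) under which any t coordinates of C x are equidistributed.
   Put at position (x, y) of the square (x, y in F^m) the base-q value of C x + lambda C y,
   where the column multiplier lambda takes two values outside {0, 1, -1}.  Along a row,
   a column or a diagonal the word is mu C x + b with mu nowhere zero; expanding the e-th
   power of a base-q numeral into products of e digits, each term depends on at most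
   e <= t coordinates, so all these e-th power sums coincide.  On two windows of columns
   lambda is constant, which makes (x, y) |-> C x + lambda C y injective, so the entries
   are 0, ..., q^(2m) - 1.  The back diagonal needs an enumeration of F^m turning
   i |-> n - 1 - i into x |-> 1 - x; it exists since both involutions have the same
   number of fixed points. *)

From mathcomp Require Import all_boot all_order all_algebra all_field.
From mathcomp Require Import zify ring.
Set Implicit Arguments. Unset Strict Implicit. Unset Printing Implicit Defensive.
Import Order.TTheory GRing.Theory Num.Theory.
Local Open Scope ring_scope.

Section LocalSums.
Variable F : finFieldType.

Lemma sum_additive_fibers (X Y : finType) (g : {ffun X -> F} -> {ffun Y -> F})
    (H : {ffun Y -> F} -> int) : zmod_morphism g ->
  \sum_x H (g x) = #|[set x | g x == 0]|%:R * \sum_(w in [set g x | x in setT]) H w.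
Proof.
move=> gB; rewrite (partition_big g (mem [set g x | x in setT])); last first.
  by move=> x _; rewrite inE imset_f.
rewrite mulr_sumr; apply: eq_bigr => w /imsetP [x0 _ ->].
rewrite (eq_bigr (fun _ => H (g x0))); last by move=> x /eqP ->.
rewrite sumr_const mulr_natl; congr (_ *+ _).
have -> : [set x | g x == 0] = [set y - x0 | y : {ffun X -> F} in [set x | g x == g x0]].
  apply/setP => x; rewrite inE; apply/eqP/imsetP => [gx0|[y]].
    by exists (x + x0); rewrite ?addrK // inE -subr_eq0 -gB addrK gx0.
  by rewrite inE => /eqP gy ->; rewrite gB gy subrr.
by rewrite card_imset; [apply: eq_card => x; rewrite inE | exact: addIr].
Qed.

Lemma sum_local_affine (X Y : finType) (A : {ffun X -> F} -> {ffun Y -> F})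
    (b : {ffun Y -> F}) (S : {set Y}) (h : {ffun Y -> F} -> int) :
    zmod_morphism A -> (forall w, exists x, {in S, A x =1 w}) ->
    (forall z z' : {ffun Y -> F}, {in S, z =1 z'} -> h z = h z') ->
  (\sum_x h (A x + b)) * #|{ffun Y -> F}|%:R = (\sum_z h z) * #|{ffun X -> F}|%:R.
Proof.
move=> AB Aonto hS.
pose pi (z : {ffun Y -> F}) := [ffun d => if d \in S then z d else 0].
have piB : zmod_morphism pi.
  by move=> z z'; apply/ffunP => d; rewrite !ffunE; case: ifP; rewrite ?subrr.
have piD z z' : pi (z + z') = pi z + pi z'.
  by apply/ffunP => d; rewrite !ffunE; case: ifP; rewrite ?addr0.
have hpi z : h (pi z) = h z by apply: hS => d dS; rewrite ffunE dS.
pose g x := pi (A x).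
have gB : zmod_morphism g by move=> x y; rewrite /g AB piB.
pose H w := h (w + pi b).
have img : [set g x | x in setT] = [set pi z | z in setT].
  apply/setP => w; apply/imsetP/imsetP => [[x _ ->]|[z _ ->]]; first by exists (A x).
  have [x Ax] := Aonto z; exists x => //; apply/ffunP => d; rewrite !ffunE.
  by case: ifP => // /Ax ->.
have card_dom (T : finType) (f : {ffun T -> F} -> {ffun Y -> F}) : zmod_morphism f ->
    #|{ffun T -> F}|%:R = #|[set x | f x == 0]|%:R * \sum_(w in f @: setT) (1 : int).
  by move=> fB; rewrite -(sum_additive_fibers (fun=> 1) fB) sumr_const card_ffun.
have -> : \sum_x h (A x + b) = \sum_x H (g x).
  by apply: eq_bigr => x _; rewrite /H /g -piD hpi.
have -> : \sum_z h z = \sum_z H (pi z).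
  rewrite (reindex_inj (addIr b)); apply: eq_bigr => z _.
  by rewrite /H -piD hpi.
rewrite (card_dom _ _ gB) (card_dom _ _ piB) !sum_additive_fibers // img; ring.
Qed.

End LocalSums.

Lemma power_sums_eq0 (F : finFieldType) (n : nat) (be : F -> F) :
    (#|[set a | be a != 0%R]| <= n)%N ->
    (forall l, (l < n)%N -> \sum_a be a * a ^+ l = 0) ->
  forall a, be a = 0.
Proof.
move=> supp_le sums0 a0; apply/eqP/negP => /negP nz_a0.
pose p := \prod_(b <- enum ([set a | be a != 0] :\ a0)) ('X - b%:P).
have size_p : (size p <= n)%N.
  rewrite size_prod_XsubC -cardE.
  by move: supp_le; rewrite (cardsD1 a0) inE nz_a0.
have : \sum_a be a * p.[a] = 0.
  rewrite (eq_bigr (fun a => \sum_(l < n) p`_l * (be a * a ^+ l))); last first.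
    by move=> a _; rewrite (horner_coef_wide _ size_p) mulr_sumr; apply: eq_bigr => l _; ring.
  by rewrite exchange_big big1 // => l _; rewrite -mulr_sumr sums0 ?mulr0.
rewrite (bigD1 a0) //= big1 ?addr0 => [|a neq_a].
  by apply/eqP; rewrite mulf_neq0 // -/(root p a0) root_prod_XsubC mem_enum !inE eqxx.
have [->|nz_a] := eqVneq (be a) 0; first by rewrite mul0r.
have /eqP -> : root p a by rewrite root_prod_XsubC mem_enum !inE neq_a nz_a.
by rewrite mulr0.
Qed.

Lemma poly_vanishing_coef_eq0 (R : idomainType) (n : nat) (c : 'I_n -> R) (pt : 'I_n -> R) :
    injective pt -> (forall i, \sum_(l < n) c l * pt i ^+ l = 0) ->
  forall l, c l = 0.
Proof.
move=> pt_inj vanish l; case: n => [|n] in c pt pt_inj vanish l *; first by case: l.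
pose p := \poly_(k < n.+1) c (inord k).
have cE (k : 'I_n.+1) : c (inord k) = c k by rewrite inord_val.
have p_pt i : p.[pt i] = 0.
  by rewrite horner_poly -[RHS](vanish i); apply: eq_bigr => k _; rewrite cE.
have /eqP p0 : p == 0.
  apply/negP => /negP nz_p.
  have roots : all (root p) [seq pt i | i <- enum 'I_n.+1].
    by apply/allP => x /mapP [i _ ->]; apply/eqP.
  have uniq_pts : uniq [seq pt i | i <- enum 'I_n.+1] by rewrite map_inj_uniq ?enum_uniq.
  have := max_poly_roots nz_p roots uniq_pts.
  by rewrite size_map -cardE card_ord ltnNge size_poly.
by have := congr1 (fun q : {poly R} => q`_l) p0; rewrite coef_poly ltn_ord coef0 cE.
Qed.

Lemma free_cols_onto (F : fieldType) (s N : nat) (D : 'I_s -> 'I_N -> F) (S : {set 'I_N}) :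
    (forall al : 'I_N -> F, (forall j, j \notin S -> al j = 0) ->
       (forall l, \sum_j al j * D l j = 0) -> forall j, al j = 0) ->
  forall w : 'I_N -> F, exists v : 'I_s -> F, {in S, forall j, \sum_l v l * D l j = w j}.
Proof.
move=> free w.
pose R : 'M[F]_(s, #|S|) := \matrix_(l, c) D l (enum_val c).
have RT_free : row_free R^T.
  rewrite -kermx_eq0; apply/eqP/row_matrixP => i; rewrite row0.
  set a := row i _.
  have aR : a *m R^T = 0 by apply/sub_kermxP; apply: row_sub.
  pose al (j : 'I_N) := \sum_(c | enum_val c == j) a 0 c.
  have al_pick c : al (enum_val c) = a 0 c.
    by rewrite /al (big_pred1 c) // => c' /=; rewrite (inj_eq enum_val_inj).
  have al0 : forall j, al j = 0.
    apply: free => [j jS|l].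
      by apply: big1 => c /eqP ec; case/negP: jS; rewrite -ec enum_valP.
    have := congr1 (fun M : 'M[F]_(1, s) => M 0 l) aR; rewrite !mxE => aR_l.
    rewrite -[RHS]aR_l.
    rewrite (eq_bigr (fun j => \sum_(c | enum_val c == j) a 0 c * D l j)); last first.
      by move=> j _; rewrite mulr_suml.
    under eq_bigr do rewrite big_mkcond /=.
    rewrite exchange_big /=; apply: eq_bigr => c _.
    by rewrite -big_mkcond /= (big_pred1 (enum_val c)) ?mxE.
  by apply/rowP => c; rewrite [RHS]mxE -al_pick al0.
have R_full : row_full R by rewrite /row_full -mxrank_tr.
have [B RB] := row_fullP R_full.
pose wv : 'rV[F]_#|S| := \row_c w (enum_val c).
exists (fun l => (wv *m B) 0 l) => j jS.
have := congr1 (fun M : 'M[F]_#|S| => (wv *m M) 0 (enum_rank_in jS j)) RB.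
rewrite mulmxA mulmx1 !mxE enum_rankK_in // => <-.
by apply: eq_bigr => l _; rewrite /R !mxE enum_rankK_in.
Qed.

Section Design.
Variables (F : finFieldType) (t : nat).
Hypotheses (t_ge3 : (3 <= t)%N) (q_ge : (4 * t - 5 <= #|F|)%N).
Local Notation q := #|F|.

Definition point (j : nat) : F := nth 0 (enum F) (j %% q).
Definition extended (j : nat) : bool := (2 * t <= j)%N.
Definition design (u : nat) (l : 'I_(t + u)) (j : 'I_(2 * (t + u))) : F :=
  if (l < t)%N then point j ^+ l else if extended j then point j ^+ (l - t) else 0.

Lemma point_eq j j' : point j = point j' -> j = j' %[mod q].
Proof.
have mod_lt i : (i %% q < #|F|)%N by rewrite ltn_pmod //; lia.
by move/eqP; rewrite /point nth_uniq ?enum_uniq -?cardE ?mod_lt // => /eqP.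
Qed.

(* Since 2(t + u) <= q + 3, two distinct columns sharing a point are some j < 3
   and j + q >= 2t. *)
Local Open Scope nat_scope.
Lemma point_collision u j j' : u < t -> j < 2 * (t + u) -> j' < 2 * (t + u) ->
  j <> j' -> point j = point j' -> extended j = ~~ extended j' /\ t <= 2 * u + 1.
Proof.
move=> lt_ut lt_j lt_j' neq_jj' /point_eq jq; rewrite /extended.
have q_gt0 : 0 < q by lia.
have [lt_jq lt_j'q] : j %/ q < 2 /\ j' %/ q < 2 by rewrite !ltn_divLR //; lia.
move: (divn_eq j q) (divn_eq j' q) lt_jq lt_j'q; rewrite jq; move: (j' %% q) => r; clear jq.
case: (j %/ q) => [|[|?]]; case: (j' %/ q) => [|[|?]] => // Ej Ej' _ _; try lia.
all: by split; [do 2 case: leqP => ? //; exfalso|]; lia.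
Qed.
Local Open Scope ring_scope.

Lemma design_col_sum u (v : 'I_(t + u) -> F) (j : 'I_(2 * (t + u))) :
  \sum_l v l * design l j =
  \sum_(l < t) v (lshift u l) * point j ^+ l +
  (if extended j then \sum_(l < u) v (rshift t l) * point j ^+ l else 0).
Proof.
rewrite big_split_ord; congr (_ + _).
  by apply: eq_bigr => l _; rewrite /design /= ltn_ord.
have tl_ge (l : 'I_u) : (t + l < t)%N = false by lia.
case: ifP => ext_j; last by apply: big1 => l _; rewrite /design /= ext_j tl_ge mulr0.
by apply: eq_bigr => l _; rewrite /design /= ext_j tl_ge addKn.
Qed.

(* The ordinary window is a Vandermonde system in the first t rows; given those,
   the extended window is a Vandermonde system in the remaining u rows. *)
Lemma design_windows_free u (ox oy : nat) (v : 'I_(t + u) -> F) : (u < t)%N ->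
    (ox + t <= 2 * t)%N -> (2 * t <= oy)%N -> (oy + u <= 2 * (t + u))%N ->
    (forall j : 'I_(2 * (t + u)), (ox <= j < ox + t)%N -> \sum_l v l * design l j = 0) ->
    (forall j : 'I_(2 * (t + u)), (oy <= j < oy + u)%N -> \sum_l v l * design l j = 0) ->
  forall l, v l = 0.
Proof.
move=> lt_ut ox_le oy_ge oy_le orth_x orth_y.
have window_inj (o n : nat) : (n <= q)%N -> injective (fun i : 'I_n => point (o + i)).
  move=> n_le i i' /point_eq /eqP; rewrite eqn_modDl.
  by rewrite !modn_small ?(leq_trans (ltn_ord _) n_le) // => /eqP /val_inj.
have low0 (l : 'I_t) : v (lshift u l) = 0.
  have t_le : (t <= q)%N by lia.
  apply: (poly_vanishing_coef_eq0 (c := fun l => v (lshift u l)) (window_inj ox t t_le)).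
  move=> i.
  have lt_it := ltn_ord i; have lt_i : (ox + i < 2 * (t + u))%N by lia.
  have := orth_x (Ordinal lt_i); rewrite design_col_sum /extended /=.
  have -> : (2 * t <= ox + i)%N = false by lia.
  by rewrite addr0 => ->; rewrite // leq_addr /= ltn_add2l.
have high0 (l : 'I_u) : v (rshift t l) = 0.
  have u_le : (u <= q)%N by lia.
  apply: (poly_vanishing_coef_eq0 (c := fun l => v (rshift t l)) (window_inj oy u u_le)).
  move=> i.
  have lt_iu := ltn_ord i; have lt_i : (oy + i < 2 * (t + u))%N by lia.
  have := orth_y (Ordinal lt_i); rewrite design_col_sum /extended /=.
  have -> : (2 * t <= oy + i)%N by lia.
  rewrite big1 ?add0r => [-> //|l' _]; last by rewrite low0 mul0r.
  by rewrite leq_addr /= ltn_add2l.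
by move=> l; case: (splitP l) => l' El; [rewrite -(low0 l') | rewrite -(high0 l')];
  congr v; apply: val_inj.
Qed.

Section Strength.
Variables (u : nat) (S : {set 'I_(2 * (t + u))}) (al : 'I_(2 * (t + u)) -> F).
Hypotheses (lt_ut : (u < t)%N) (card_S : (#|S| <= t)%N).
Hypotheses (al_supp : forall j, j \notin S -> al j = 0)
  (al_orth : forall l, \sum_j al j * design l j = 0).

Definition point_weight (P : pred 'I_(2 * (t + u))) (a : F) :=
  \sum_(j | P j && (point j == a)) al j.

Let kind (e : bool) : pred 'I_(2 * (t + u)) := fun j => extended j == e.

Lemma point_weight_supp P a :
  point_weight P a != 0 -> exists2 j, j \in S & P j && (point j == a).
Proof.
move=> nz; apply/exists_inP; apply: contraNT nz => /exists_inPn none.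
apply/eqP/big1 => j Pj; apply: al_supp; apply/negP => jS.
by move: (none j jS); rewrite Pj.
Qed.

Lemma card_point_weight_supp P :
  (#|[set a | point_weight P a != 0%R]| <= #|[set j in S | P j]|)%N.
Proof.
apply: (leq_trans _ (leq_imset_card (fun j : 'I_(2 * (t + u)) => point j) _)).
apply/subset_leq_card/subsetP => a.
by rewrite inE => /point_weight_supp [j jS /andP [Pj /eqP <-]]; rewrite imset_f // inE jS.
Qed.

Lemma sum_by_point P (f : F -> F) :
  \sum_(j | P j) al j * f (point j) = \sum_a point_weight P a * f a.
Proof.
rewrite (partition_big (fun j : 'I_(2 * (t + u)) => point j) predT) //; apply: eq_bigr => a _.
by rewrite mulr_suml; apply: eq_bigr => j /andP [_ /eqP ->].
Qed.

Lemma point_weight_eq0 a : point_weight predT a = 0.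
Proof.
apply: (power_sums_eq0 (n := t)) => [|l lt_lt].
  by apply: leq_trans (card_point_weight_supp _) (leq_trans (subset_leq_card _) card_S);
    apply/subsetP => j; rewrite inE => /andP [].
have lt_lt' : (l < t + u)%N by lia.
rewrite -sum_by_point -[RHS](al_orth (Ordinal lt_lt')).
by apply: eq_bigr => j _; rewrite /design /= lt_lt.
Qed.

Lemma point_weight_kind a : point_weight (kind false) a = - point_weight (kind true) a.
Proof.
apply/eqP; rewrite -addr_eq0 -(point_weight_eq0 a) addrC; apply/eqP.
rewrite /point_weight [RHS](bigID (kind true)) /=; congr (_ + _); apply: eq_bigl => j;
  by rewrite /kind; case: (extended j); rewrite ?andbT ?andbF.
Qed.

Lemma card_ext_weight_supp : (#|[set a | point_weight (kind true) a != 0%R]| <= u)%N.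
Proof.
set G := [set a | _].
have [-> | [a aG]] := set_0Vmem G; first by rewrite cards0.
have G_false : G = [set a | point_weight (kind false) a != 0].
  by apply/setP => b; rewrite !inE point_weight_kind oppr_eq0.
have := aG; rewrite {1}G_false inE => /point_weight_supp [j1 _ /andP [/eqP e1 /eqP p1]].
have := aG; rewrite inE => /point_weight_supp [j2 _ /andP [/eqP e2 /eqP p2]].
have neq_j12 : nat_of_ord j1 <> j2 by move=> /val_inj E; move: e1 e2; rewrite E => ->.
have [_ t_le] := point_collision lt_ut (ltn_ord j1) (ltn_ord j2) neq_j12 (etrans p1 (esym p2)).
have : (#|G| <= #|[set j in S | kind true j]|)%N := card_point_weight_supp (kind true).
have := card_point_weight_supp (kind false).
move: card_S; rewrite -G_false -(cardsID [set j | kind true j] S).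
have -> : [set j in S | kind true j] = S :&: [set j | kind true j].
  by apply/setP => j; rewrite !inE.
have -> : [set j in S | kind false j] = S :\: [set j | kind true j].
  by apply/setP => j; rewrite !inE /kind eqbF_neg eqb_id andbC.
set x := #|S :&: _|; set y := #|S :\: _|; lia.
Qed.

Lemma ext_weight_eq0 a : point_weight (kind true) a = 0.
Proof.
apply: (power_sums_eq0 (n := u)) => [|l lt_lu]; first exact: card_ext_weight_supp.
have lt_l : (t + l < t + u)%N by lia.
rewrite -sum_by_point -[RHS](al_orth (Ordinal lt_l)) big_mkcond /=.
apply: eq_bigr => j _; rewrite /design /= /kind.
have -> : (t + l < t)%N = false by lia.
by rewrite addKn; case: (extended j); rewrite ?mulr0.
Qed.

Lemma design_strength j : al j = 0.
Proof.
have weight0 e a : point_weight (kind e) a = 0.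
  by case: e; rewrite ?point_weight_kind ext_weight_eq0 ?oppr0.
rewrite -(weight0 (extended j) (point j)) /point_weight (big_pred1 j) // => j' /=.
apply/andP/eqP => [[/eqP same_kind /eqP same_point]|->]; last by rewrite /kind !eqxx.
apply/val_inj; have [//|/eqP neq_j'j] := eqVneq (val j') (val j).
have [ext_j' _] := point_collision lt_ut (ltn_ord j') (ltn_ord j) neq_j'j same_point.
by move: same_kind; rewrite ext_j'; case: (extended j).
Qed.

End Strength.
End Design.

Section Digits.
Local Open Scope nat_scope.
Variable q : nat.

Lemma digits_sum_lt N (a : 'I_N -> nat) : (forall i, a i < q) ->
  \sum_(i < N) a i * q ^ i < q ^ N.
Proof.
elim: N a => [|N IH] a lt_aq; first by rewrite big_ord0.
rewrite big_ord_recr /= expnS.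
have := IH (fun i => a (widen_ord (leqnSn N) i)) (fun i => lt_aq _).
have := lt_aq ord_max; set X := \sum_(i < N) _; set Q := q ^ N; nia.
Qed.

Hypothesis q_gt0 : 0 < q.

Lemma digits_sum_inj N (a b : 'I_N -> nat) : (forall i, a i < q) -> (forall i, b i < q) ->
  \sum_(i < N) a i * q ^ i = \sum_(i < N) b i * q ^ i -> a =1 b.
Proof.
elim: N a b => [|N IH] a b lt_aq lt_bq; first by move=> _ [].
have lift_sum c : \sum_(i < N.+1) c i * q ^ i =
    c ord0 + q * \sum_(i < N) c (lift ord0 i) * q ^ i.
  rewrite big_ord_recl big_distrr /= expn0 muln1; congr (_ + _).
  by apply: eq_bigr => i _; rewrite /bump /= add1n expnS; lia.
rewrite !lift_sum => eq_sum.
have eq0 : a ord0 = b ord0.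
  have := congr1 (modn^~ q) eq_sum; rewrite /= !(addnC (_ ord0)) !(mulnC q).
  by rewrite !modnMDl !modn_small ?lt_aq ?lt_bq.
have /IH eq_lift : \sum_(i < N) a (lift ord0 i) * q ^ i = \sum_(i < N) b (lift ord0 i) * q ^ i.
  by move: eq_sum; rewrite eq0 => /addnI /eqP; rewrite eqn_mul2l gtn_eqF // => /eqP.
by move=> i; case: (unliftP ord0 i) => [j ->|->] //; apply: eq_lift.
Qed.

End Digits.

Section Code.
Variables (F : finFieldType) (t : nat).
Hypotheses (t_ge3 : (3 <= t)%N) (q_ge : (4 * t - 5 <= #|F|)%N).
Variables (k : nat) (u : 'I_k -> nat).
Hypothesis lt_ut : forall i, (u i < t)%N.
Local Notation q := #|F|.

Fact card_field_gt0 : (0 < q)%N. Proof. lia. Qed.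

Definition block_row (i : 'I_k) : finType := 'I_(t + u i).
Definition block_col (i : 'I_k) : finType := 'I_(2 * (t + u i)).
Definition row_idx : finType := {i : 'I_k & block_row i}.
Definition col_idx : finType := {i : 'I_k & block_col i}.
Local Notation V := {ffun row_idx -> F}.
Local Notation Z := {ffun col_idx -> F}.

(* The linear code with block-diagonal generator matrix, one design per block. *)
Definition encode (x : V) : Z :=
  [ffun d => \sum_(l : block_row (tag d)) x (Tagged block_row l) * design F l (tagged d)].

Lemma encodeB : zmod_morphism encode.
Proof.
move=> x y; apply/ffunP => d; rewrite !ffunE -sumrB; apply: eq_bigr => l _.
by rewrite !ffunE mulrBl.
Qed.

Lemma encode_onto (S : {set col_idx}) : (#|S| <= t)%N ->
  forall w : Z, exists x, {in S, encode x =1 w}.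
Proof.
move=> card_S w.
have block_onto i : exists v : 'I_(t + u i) -> F, forall j : block_col i,
    Tagged block_col j \in S -> \sum_l v l * design F l j = w (Tagged block_col j).
  pose Si := [set j : block_col i | Tagged block_col j \in S].
  have card_Si : (#|Si| <= t)%N.
    apply: leq_trans card_S; rewrite -(card_imset _ (@eq_from_Tagged _ block_col i)).
    by apply/subset_leq_card/subsetP => d /imsetP [j]; rewrite inE => jS ->.
  have [v v_onto] := free_cols_onto
    (fun al => design_strength (al := al) t_ge3 q_ge (lt_ut i) card_Si)
    (fun j => w (Tagged block_col j)).
  by exists v => j jS; apply: v_onto; rewrite inE.
have [v v_onto] := fin_all_exists block_onto.
exists [ffun p : row_idx => v (tag p) (tagged p)] => -[i j] dS.
by rewrite ffunE /= -(v_onto i j dS); apply: eq_bigr => l _; rewrite ffunE.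
Qed.

Definition digit (z : Z) (d : col_idx) : nat := enum_rank (z d).
Definition zval (z : Z) : nat := \sum_d digit z d * q ^ enum_rank d.

Lemma zval_ord z : zval z = (\sum_(i < #|col_idx|) digit z (enum_val i) * q ^ i)%N.
Proof.
rewrite /zval (reindex (enum_val : 'I_#|col_idx| -> col_idx)) /=.
  by apply: eq_bigr => i _; rewrite enum_valK.
exact: onW_bij (enum_val_bij _).
Qed.

Lemma zval_lt z : (zval z < q ^ #|col_idx|)%N.
Proof. by rewrite zval_ord; apply: digits_sum_lt => i; exact: ltn_ord. Qed.

Lemma zval_inj : injective zval.
Proof.
move=> z z' eq_z; apply/ffunP => d.
have := digits_sum_inj card_field_gt0 (fun i => ltn_ord _) (fun i => ltn_ord _)
  (etrans (esym (zval_ord z)) (etrans eq_z (zval_ord z'))) (enum_rank d).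
by rewrite /digit enum_rankK => /val_inj /enum_rank_inj.
Qed.

(* The e-th power of a numeral is a sum of products of e digit terms, each
   depending on at most e <= t columns of the word. *)
Lemma zval_powE e z : ((zval z)%:R : int) ^+ e =
  \sum_(f : {ffun 'I_e -> col_idx}) \prod_i (digit z (f i) * q ^ enum_rank (f i))%:R.
Proof. by rewrite /zval natr_sum -{1}(card_ord e) -prodr_const bigA_distr_bigA. Qed.

Definition pow_sum (f : V -> Z) (e : nat) : int := \sum_x (zval (f x))%:R ^+ e.

Definition balanced (f : V -> Z) : Prop := forall e, (e <= t)%N ->
  pow_sum f e * #|Z|%:R = (\sum_z ((zval z)%:R : int) ^+ e) * #|V|%:R.

Lemma affine_balanced (f : V -> Z) (mu : col_idx -> F) (b : Z) : (forall d, mu d != 0) ->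
  (forall x, f x = [ffun d => mu d * encode x d] + b) -> balanced f.
Proof.
move=> mu_nz fE e le_et; rewrite /pow_sum.
under eq_bigr do rewrite fE zval_powE.
under [X in _ = X * _]eq_bigr do rewrite zval_powE.
rewrite exchange_big [X in _ = X * _]exchange_big /= !mulr_suml.
apply: eq_bigr => g _; apply: (sum_local_affine _ (S := [set g i | i : 'I_e])).
- by move=> x y; rewrite encodeB; apply/ffunP => d; rewrite !ffunE mulrBr.
- move=> w; have card_S : (#|[set g i | i : 'I_e]| <= t)%N.
    by apply: leq_trans (leq_imset_card _ _) _; rewrite card_ord.
  have [x x_w] := encode_onto card_S [ffun d => (mu d)^-1 * w d].
  by exists x => d dS; rewrite ffunE x_w // ffunE mulVKf.
- by move=> z z' zz'; apply: eq_bigr => i _; rewrite /digit zz' // imset_f.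
Qed.

Variables l0 l1 : F.

(* The multiplier is l0 on the first t ordinary and the first u extended columns of
   each block and l1 elsewhere, so that both windows of [design_windows_free] see a
   constant multiplier. *)
Definition first_window (u0 j : nat) : bool := ((j < t) || (2 * t <= j < 2 * t + u0))%N.
Definition multiplier (d : col_idx) : F :=
  if first_window (u (tag d)) (tagged d) then l0 else l1.
Definition pair_code (x y : V) : Z := [ffun d => encode x d + multiplier d * encode y d].

Lemma pair_codeB x y x' y' : pair_code (x - x') (y - y') = pair_code x y - pair_code x' y'.
Proof. by rewrite /pair_code !encodeB; apply/ffunP => d; rewrite !ffunE; ring. Qed.

Lemma pair_code_window x y i c (ox oy : nat) : pair_code x y = 0 ->
    (ox + t <= 2 * t)%N -> (2 * t <= oy)%N -> (oy + u i <= 2 * (t + u i))%N ->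
    (forall j : 'I_(2 * (t + u i)), (ox <= j < ox + t)%N || (oy <= j < oy + u i)%N ->
       multiplier (Tagged block_col j) = c) ->
  forall l : 'I_(t + u i), x (Tagged block_row l) + c * y (Tagged block_row l) = 0.
Proof.
move=> xy0 ox_le oy_ge oy_le mult_c.
have orth (j : 'I_(2 * (t + u i))) : (ox <= j < ox + t)%N || (oy <= j < oy + u i)%N ->
    \sum_l (x (Tagged block_row l) + c * y (Tagged block_row l)) * design F l j = 0.
  move=> win_j; have := congr1 (fun z : Z => z (Tagged block_col j)) xy0.
  rewrite !ffunE mult_c // => sum0; rewrite -[RHS]sum0 mulr_sumr -big_split /=.
  by apply: eq_bigr => l _; ring.
apply: (design_windows_free t_ge3 q_ge (lt_ut i) ox_le oy_ge oy_le) => j win_j;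
  by apply: orth; rewrite win_j ?orbT.
Qed.

Hypothesis l01 : l0 != l1.

Lemma pair_code_eq0 x y : pair_code x y = 0 -> x = 0 /\ y = 0.
Proof.
move=> xy0.
have comb0 i (l : 'I_(t + u i)) : x (Tagged block_row l) + l0 * y (Tagged block_row l) = 0 /\
                 x (Tagged block_row l) + l1 * y (Tagged block_row l) = 0.
  split; [apply: (pair_code_window (ox := 0) (oy := 2 * t) xy0)
         |apply: (pair_code_window (ox := t) (oy := 2 * t + u i) xy0)]; try lia;
    by move=> j win_j; rewrite /multiplier /first_window /=; case: ifP => //; lia.
have y0 i (l : 'I_(t + u i)) : y (Tagged block_row l) = 0.
  have [e0 e1] := comb0 i l.
  have : (l0 - l1) * y (Tagged block_row l) =
      (x (Tagged block_row l) + l0 * y (Tagged block_row l)) -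
      (x (Tagged block_row l) + l1 * y (Tagged block_row l)) by ring.
  by rewrite e0 e1 subrr => /eqP; rewrite mulf_eq0 subr_eq0 (negPf l01) => /eqP.
have x0 i (l : 'I_(t + u i)) : x (Tagged block_row l) = 0.
  by have [e0 _] := comb0 i l; rewrite y0 mulr0 addr0 in e0.
by split; apply/ffunP => -[i l]; rewrite ffunE ?x0 ?y0.
Qed.

Lemma pair_code_inj x y x' y' : pair_code x y = pair_code x' y' -> x = x' /\ y = y'.
Proof.
move=> eq_xy; have /pair_code_eq0 [] : pair_code (x - x') (y - y') = 0.
  by rewrite pair_codeB eq_xy subrr.
by move=> /subr0_eq -> /subr0_eq ->.
Qed.

Hypotheses (l0_ok : [&& l0 != 0, 1 + l0 != 0 & 1 - l0 != 0])
  (l1_ok : [&& l1 != 0, 1 + l1 != 0 & 1 - l1 != 0]).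

Lemma multiplier_ok d : [&& multiplier d != 0, 1 + multiplier d != 0 & 1 - multiplier d != 0].
Proof. by rewrite /multiplier; case: ifP. Qed.

Lemma row_balanced x0 : balanced (pair_code x0).
Proof.
apply: (affine_balanced (mu := multiplier) (b := encode x0)) => [d|y].
  by case/and3P: (multiplier_ok d).
by apply/ffunP => d; rewrite !ffunE addrC.
Qed.

Lemma col_balanced y0 : balanced (pair_code^~ y0).
Proof.
apply: (affine_balanced (mu := fun=> 1) (b := [ffun d => multiplier d * encode y0 d]))
  => [d|x]; first exact: oner_neq0.
by apply/ffunP => d; rewrite !ffunE mul1r.
Qed.

Lemma diag_balanced : balanced (fun x => pair_code x x).
Proof.
apply: (affine_balanced (mu := fun d => 1 + multiplier d) (b := 0)) => [d|x].
  by case/and3P: (multiplier_ok d).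
by apply/ffunP => d; rewrite !ffunE; ring.
Qed.

Lemma antidiag_balanced c : balanced (fun x => pair_code x (c - x)).
Proof.
apply: (affine_balanced (mu := fun d => 1 - multiplier d)
  (b := [ffun d => multiplier d * encode c d])) => [d|x].
  by case/and3P: (multiplier_ok d).
by rewrite /pair_code encodeB; apply/ffunP => d; rewrite !ffunE; ring.
Qed.

Variables (n : nat) (beta : 'I_n -> V).
Hypotheses (beta_bij : bijective beta) (beta_rev : forall i, beta (rev_ord i) = 1 - beta i).

Definition pair_square : 'M[int]_n := \matrix_(i, j) (zval (pair_code (beta i) (beta j)))%:R.

Lemma sum_beta (G : V -> int) : \sum_(i < n) G (beta i) = \sum_x G x.
Proof. by rewrite (reindex beta) //; exact: onW_bij. Qed.

Lemma pair_square_multimagic : is_general_multimagic t pair_square.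
Proof.
move=> e /andP [_ le_et].
have ZZ_nz : #|Z|%:R != 0 :> int by rewrite pnatr_eq0 -lt0n card_ffun expn_gt0 card_field_gt0.
have line_sum f : balanced f -> pow_sum f e = pow_sum (pair_code 0) e.
  by move=> f_bal; apply: (mulIf ZZ_nz); rewrite f_bal // row_balanced.
exists (pow_sum (pair_code 0) e); split; [|split; [|split]].
- move=> i; rewrite -(line_sum _ (row_balanced (beta i))) /pow_sum -sum_beta.
  by apply: eq_bigr => j _; rewrite !mxE.
- move=> j; rewrite -(line_sum _ (col_balanced (beta j))) /pow_sum -sum_beta.
  by apply: eq_bigr => i _; rewrite !mxE.
- rewrite -(line_sum _ diag_balanced) /pow_sum -sum_beta.
  by apply: eq_bigr => i _; rewrite !mxE.
- rewrite -(line_sum _ (antidiag_balanced 1)) /pow_sum -sum_beta.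
  by apply: eq_bigr => i _; rewrite !mxE /back_diag_index beta_rev.
Qed.

Hypothesis n_sq : (n ^ 2 = q ^ #|col_idx|)%N.

Lemma pair_square_consecutive : consecutive_entries pair_square.
Proof.
exists 0 => v lt_v.
have [beta_inv betaK _] := beta_bij.
have lt_entry (p : 'I_n * 'I_n) : (zval (pair_code (beta p.1) (beta p.2)) < n ^ 2)%N.
  by rewrite n_sq zval_lt.
pose entry p : 'I_(n ^ 2) := Ordinal (lt_entry p).
have entry_inj : injective entry.
  move=> [a b] [c d] /(congr1 val) /= /zval_inj /pair_code_inj [eq_ac eq_bd].
  by rewrite -(betaK a) -(betaK b) eq_ac eq_bd !betaK.
have card_le : (#|'I_(n ^ 2)| <= #|{: 'I_n * 'I_n}|)%N.
  by rewrite card_ord card_prod card_ord mulnn.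
have /codomP [p /(congr1 val) /= pv] := inj_card_onto entry_inj card_le (Ordinal lt_v).
have entryE p' : pair_square p'.1 p'.2 = 0 + (entry p' : nat)%:Z.
  by rewrite !mxE add0r natz.
exists p; split => [|p']; first by rewrite entryE /= -pv.
rewrite entryE /= pv => /addrI /eqP; rewrite eqz_nat => /eqP eq_p'p.
by apply/entry_inj/val_inj.
Qed.

End Code.

Section Involution.
Variables (T : finType) (s : T -> T).
Hypothesis sK : involutive s.

Definition fixed_pts : {set T} := [set x | s x == x].

Lemma mem_orbit2 a x : (s x \in [set a; s a]) = (x \in [set a; s a]).
Proof. by rewrite !inE (canF_eq sK) (can_eq sK) orbC. Qed.

Lemma orbit2_fix a : [set a; s a] :&: fixed_pts = if s a == a then [set a] else set0.
Proof.
apply/setP => x; rewrite !inE; case: (eqVneq (s a) a) => [fa|nfa]; rewrite ?inE.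
  by rewrite fa orbb andb_idr // => /eqP ->; rewrite fa.
by apply/negbTE/andP => -[/orP [] /eqP -> /eqP]; [apply/eqP | rewrite sK => /esym; apply/eqP].
Qed.

Lemma card_orbit2_fix a : #|[set a; s a] :&: fixed_pts| = (s a == a).
Proof. by rewrite orbit2_fix; case: ifP; rewrite ?cards1 ?cards0. Qed.

Variables (X : {set T}) (a : T).
Hypotheses (sX : {in X, forall x, s x \in X}) (aX : a \in X).

Lemma orbit2_sub : [set a; s a] \subset X.
Proof. by apply/subsetP => x; rewrite !inE => /orP [] /eqP ->; rewrite ?sX. Qed.

Lemma setD_orbit2_stable : {in X :\: [set a; s a], forall x, s x \in X :\: [set a; s a]}.
Proof. by move=> x; rewrite !in_setD mem_orbit2 => /andP [-> /sX ->]. Qed.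

Lemma card_setD_orbit2 :
  #|X| = (#|X :\: [set a; s a]| + (s a != a).+1)%N /\
  #|X :&: fixed_pts| = (#|(X :\: [set a; s a]) :&: fixed_pts| + (s a == a))%N.
Proof.
have sub := orbit2_sub; rewrite -card_orbit2_fix.
rewrite -[in #|X|](cardsID [set a; s a] X) (setIidPr sub) cards2 eq_sym addnC; split=> //.
rewrite -(cardsID [set a; s a] (X :&: fixed_pts)) addnC setIAC (setIidPr sub); congr (_ + _)%N.
by rewrite setIDAC.
Qed.

End Involution.

Section Conjugacy.
Variables (A B : finType) (sg : A -> A) (tau : B -> B) (b0 : B).
Hypotheses (sgK : involutive sg) (tauK : involutive tau).

Definition conj_on (X : {set A}) (Y : {set B}) (f : A -> B) :=
  [/\ {in X, forall x, f (sg x) = tau (f x)}, {in X &, injective f}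
    & {in X, forall x, f x \in Y}].

Lemma exists_orbit2_partner (X : {set A}) (Y : {set B}) a : a \in X ->
    #|X| = #|Y| -> #|X :&: fixed_pts sg| = #|Y :&: fixed_pts tau| ->
  exists2 b, b \in Y & (tau b == b) = (sg a == a).
Proof.
move=> aX cardXY cardF; case: (eqVneq (sg a) a) => [fa|nfa].
  have : (0 < #|Y :&: fixed_pts tau|)%N.
    by rewrite -cardF; apply/card_gt0P; exists a; rewrite !inE aX fa eqxx.
  by case/card_gt0P => b; rewrite !inE => /andP [bY fb]; exists b; rewrite // fb fa eqxx.
have : (0 < #|Y :\: fixed_pts tau|)%N.
  have : (0 < #|X :\: fixed_pts sg|)%N by apply/card_gt0P; exists a; rewrite !inE aX nfa.
  by have := cardsID (fixed_pts sg) X; have := cardsID (fixed_pts tau) Y; lia.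
by case/card_gt0P => b; rewrite !inE => /andP [/negPf nfb bY]; exists b.
Qed.

(* Send a to b and sg a to tau b; the compatibility of fixedness makes this well defined. *)
Lemma conj_on_extend (X : {set A}) (Y : {set B}) a b f :
    b \in Y -> tau b \in Y -> (tau b == b) = (sg a == a) ->
    conj_on (X :\: [set a; sg a]) (Y :\: [set b; tau b]) f ->
  conj_on X Y (fun x => if x \in [set a; sg a] then (if x == a then b else tau b) else f x).
Proof.
move=> bY tbY fix_ab [f_sg f_inj f_Y]; set g := fun x => _.
have other y : y \in [set a; sg a] -> y != a -> y = sg a.
  by rewrite !inE => /orP [/eqP ->|/eqP ->]; rewrite ?eqxx.
have fix_a : tau b = b -> sg a = a by move/eqP; rewrite fix_ab => /eqP.
have gO y : y \in [set a; sg a] -> g y = if y == a then b else tau b by rewrite /g => ->.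
have X'_X y : y \in X -> y \notin [set a; sg a] -> y \in X :\: [set a; sg a].
  by move=> yX Oy; rewrite in_setD Oy.
have g_O x : x \in X -> (g x \in [set b; tau b]) = (x \in [set a; sg a]).
  move=> xX; have [Ox|Ox] := boolP (x \in [set a; sg a]).
    by rewrite gO //; case: eqP; rewrite !inE eqxx ?orbT.
  by rewrite /g (negbTE Ox); have := f_Y _ (X'_X _ xX Ox); rewrite in_setD => /andP [/negbTE].
split.
- move=> x xX; have [Ox|Ox] := boolP (x \in [set a; sg a]); last first.
    by rewrite /g mem_orbit2 // (negbTE Ox); apply/f_sg/X'_X.
  rewrite !gO ?mem_orbit2 //; case: (eqVneq x a) => [->|nxa].
    by case: (eqVneq (sg a) a) => [fa|//]; move: fix_ab; rewrite fa eqxx => /eqP ->.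
  by rewrite (other x) // sgK eqxx tauK.
- move=> x x' xX x'X eq_g; have [Ox|Ox] := boolP (x \in [set a; sg a]).
    have Ox' : x' \in [set a; sg a] by rewrite -g_O // -eq_g g_O.
    move: eq_g; rewrite !gO //.
    case: (eqVneq x a) => [->|nxa]; case: (eqVneq x' a) => [->|nx'a] //.
    + by move/esym/fix_a => fa; rewrite (other x') // fa.
    + by move/fix_a => fa; rewrite (other x) // fa.
    + by rewrite (other x) // (other x').
  have Ox' : x' \notin [set a; sg a] by rewrite -g_O // -eq_g g_O.
  by move: eq_g; rewrite /g (negbTE Ox) (negbTE Ox'); apply: f_inj; apply: X'_X.
- move=> x xX; have [Ox|Ox] := boolP (x \in [set a; sg a]).
    by rewrite gO //; case: eqP.
  by have := f_Y _ (X'_X _ xX Ox); rewrite /g (negbTE Ox) in_setD => /andP [].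
Qed.

Lemma involutions_conj_on (X : {set A}) (Y : {set B}) :
    {in X, forall x, sg x \in X} -> {in Y, forall y, tau y \in Y} ->
    #|X| = #|Y| -> #|X :&: fixed_pts sg| = #|Y :&: fixed_pts tau| ->
  exists f, conj_on X Y f.
Proof.
have [N] := ubnP #|X|; elim: N X Y => // N IH X Y ltXN sgX tauY cardXY cardF.
have [X0|[a aX]] := set_0Vmem X.
  by exists (fun=> b0); split=> [x|x x'|x]; rewrite X0 inE.
have [b bY fix_ab] := exists_orbit2_partner aX cardXY cardF.
have [cardX cardXF] := card_setD_orbit2 sgK sgX aX.
have [cardY cardYF] := card_setD_orbit2 tauK tauY bY.
have [|||||f f_conj] := IH (X :\: [set a; sg a]) (Y :\: [set b; tau b]).
- by move: ltXN; rewrite cardX; lia.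
- exact: setD_orbit2_stable.
- exact: setD_orbit2_stable.
- by move: cardXY; rewrite cardX cardY fix_ab; lia.
- by move: cardF; rewrite cardXF cardYF fix_ab; lia.
by eexists; apply: conj_on_extend f_conj; rewrite ?tauY.
Qed.

Lemma involutions_conj : #|A| = #|B| -> #|fixed_pts sg| = #|fixed_pts tau| ->
  exists f : A -> B, bijective f /\ forall x, f (sg x) = tau (f x).
Proof.
move=> cardAB cardF.
have [||||f [f_sg f_inj _]] := @involutions_conj_on [set: A] [set: B].
- by move=> x; rewrite inE.
- by move=> y; rewrite inE.
- by rewrite !cardsT.
- by rewrite !setTI.
exists f; split=> [|x]; last by apply: f_sg; rewrite inE.
by apply: inj_card_bij; [move=> x y; apply: f_inj; rewrite inE | rewrite cardAB].
Qed.

End Conjugacy.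

Lemma card_fixed_pts_rev n : #|fixed_pts (@rev_ord n)| = odd n.
Proof.
have fixE (i : 'I_n) : (i \in fixed_pts (@rev_ord n)) = (n == i.*2.+1)%N.
  move: (ltn_ord i) => lt_in; rewrite inE -val_eqE /= -addnn; apply/eqP/eqP; lia.
have [odd_n|even_n] := boolP (odd n).
  have n_eq := odd_double_half n; rewrite odd_n -addnn in n_eq.
  have lt_half : (n./2 < n)%N by lia.
  suff -> : fixed_pts (@rev_ord n) = [set Ordinal lt_half] by rewrite cards1.
  by apply/setP => i; rewrite fixE inE -val_eqE /= -addnn; apply/eqP/eqP; lia.
apply/eqP; rewrite cards_eq0; apply/eqP/setP => i; rewrite fixE inE.
by apply/negbTE; apply: contra even_n => /eqP ->; rewrite /= odd_double.
Qed.

Lemma card_fixed_pts_compl (F : finFieldType) (K : finType) : (0 < #|K|)%N ->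
  #|fixed_pts (fun x : {ffun K -> F} => 1 - x)| = (2%:R != 0 :> F).
Proof.
case/card_gt0P => k0 _.
have fixE (x : {ffun K -> F}) :
    (x \in fixed_pts (fun y : {ffun K -> F} => 1 - y)) = [forall k, x k *+ 2 == 1].
  rewrite inE; apply/eqP/forallP => [fx k|x2]; last apply/ffunP => k.
    by rewrite mulr2n -{1}fx !ffunE subrK.
  by rewrite !ffunE; apply/eqP; rewrite subr_eq -mulr2n eq_sym x2.
have [two0|two_nz] := eqVneq (2%:R : F) 0.
  apply/eqP; rewrite cards_eq0; apply/eqP/setP => x; rewrite fixE inE.
  by apply/negbTE/negP => /forallP /(_ k0); rewrite -mulr_natr two0 mulr0 eq_sym oner_eq0.
suff -> : fixed_pts (fun x : {ffun K -> F} => 1 - x) = [set [ffun=> 2%:R^-1]].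
  by rewrite cards1.
apply/setP => x; rewrite fixE inE; apply/forallP/eqP => [x2|-> k].
  by apply/ffunP => k; rewrite ffunE -[x k](mulfK two_nz) mulr_natr (eqP (x2 k)) mul1r.
by rewrite ffunE -(mulr_natr (2%:R^-1)) mulVf.
Qed.

Lemma odd_card_pchar (F : finFieldType) p k :
  p \in [pchar F] -> #|F| = (p ^ k)%N -> (0 < k)%N -> odd #|F| = (2%:R != 0 :> F).
Proof.
move=> pF cardF k_gt0; have p_pr := pcharf_prime pF.
rewrite cardF oddX eqn0Ngt k_gt0 /= -(dvdn_pcharf pF) (dvdn_prime2 p_pr) //.
case: (even_prime p_pr) => [->|odd_p] //; rewrite odd_p.
by apply/esym; apply: contraTneq odd_p => ->.
Qed.

Lemma exists_rev_compl_bij (F : finFieldType) (K : finType) (n p e : nat) :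
    p \in [pchar F] -> #|F| = (p ^ e)%N -> (0 < e)%N -> (0 < #|K|)%N -> n = (#|F| ^ #|K|)%N ->
  exists beta : 'I_n -> {ffun K -> F},
    bijective beta /\ forall i, beta (rev_ord i) = 1 - beta i.
Proof.
move=> pF cardF e_gt0 K_gt0 n_eq.
have complK : involutive (fun x : {ffun K -> F} => 1 - x).
  by move=> x; rewrite opprB addrC subrK.
have [||beta [beta_bij beta_rev]] := involutions_conj (0 : {ffun K -> F}) (@rev_ordK n) complK.
- by rewrite card_ord card_ffun n_eq.
- rewrite card_fixed_pts_rev card_fixed_pts_compl // n_eq oddX eqn0Ngt K_gt0 /=.
  by rewrite (odd_card_pchar pF cardF e_gt0).
by exists beta.
Qed.

Lemma exists_block_sizes t m : (0 < t <= m)%N ->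
  exists k (u : 'I_k -> nat), (forall i, u i < t)%N /\ (\sum_i (t + u i))%N = m.
Proof.
case/andP => t_gt0 le_tm; have k_gt0 : (0 < m %/ t)%N by rewrite divn_gt0.
exists (m %/ t)%N, (fun i => if val i == 0%N then (m %% t)%N else 0%N); split.
  by move=> i; case: ifP; rewrite ?ltn_pmod.
rewrite big_split sum_nat_const card_ord (bigD1 (Ordinal k_gt0)) //= big1 ?addn0.
  by rewrite -divn_eq.
by move=> i /negPf; rewrite -val_eqE /= eq_sym => ->.
Qed.

Lemma card_row_idx t k (u : 'I_k -> nat) : #|row_idx t u| = (\sum_i (t + u i))%N.
Proof.
by rewrite card_tagged sumnE big_map big_enum; apply: eq_bigr => i _; rewrite card_ord.
Qed.

Lemma card_col_idx t k (u : 'I_k -> nat) : #|col_idx t u| = (2 * \sum_i (t + u i))%N.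
Proof.
rewrite card_tagged sumnE big_map big_enum big_distrr.
by apply: eq_bigr => i _; rewrite card_ord.
Qed.

Lemma exists_notin (T : finType) (s : seq T) : (size s < #|T|)%N -> exists x, x \notin s.
Proof.
move=> lt_sT; have [x sx|all_s] := pickP (fun x => x \notin s); first by exists x.
suff : (#|T| <= size s)%N by rewrite leqNgt lt_sT.
apply: leq_trans (card_size s); apply/subset_leq_card/subsetP => x _.
by move: (all_s x) => /negbFE.
Qed.

Lemma exists_mults (F : finFieldType) : (4 < #|F|)%N -> exists l0 l1 : F,
  [/\ l0 != l1, [&& l0 != 0, 1 + l0 != 0 & 1 - l0 != 0]
             & [&& l1 != 0, 1 + l1 != 0 & 1 - l1 != 0]].
Proof.
move=> F_gt4.
have ok (l : F) : l \notin [:: 0; -1; 1] -> [&& l != 0, 1 + l != 0 & 1 - l != 0].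
  by rewrite !inE !negb_or addrC addr_eq0 subr_eq0 [1 == l]eq_sym => /and3P [-> -> ->].
pose s0 : seq F := [:: 0; -1; 1].
have [l0 /ok l0_ok] := @exists_notin _ s0 (ltnW F_gt4).
have [l1] := @exists_notin _ (l0 :: s0) F_gt4.
rewrite inE negb_or eq_sym => /andP [l01 /ok l1_ok].
by exists l0, l1.
Qed.

Theorem corollary4p2 (t m q : nat) :
  (3 <= t)%N -> (t <= m)%N -> prime_power q -> (4 * t - 5 <= q)%N ->
  exists M : 'M[int]_(q ^ m), MS t M.
Proof.
move=> t_ge3 le_tm [p [e [p_pr [e_gt0 ->]]]] q_ge.
have [F pF cardF] := pPrimePowerField p_pr e_gt0; rewrite -cardF in q_ge *.
have [k [u [lt_ut sum_u]]] : exists k (u : 'I_k -> nat),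
    (forall i, u i < t)%N /\ (\sum_i (t + u i))%N = m.
  by apply: exists_block_sizes; rewrite le_tm andbT; lia.
have F_gt4 : (4 < #|F|)%N by lia.
have [l0 [l1 [l01 ok0 ok1]]] := exists_mults F_gt4.
have rows_gt0 : (0 < #|row_idx t u|)%N by rewrite card_row_idx sum_u; lia.
have n_eq : (#|F| ^ m = #|F| ^ #|row_idx t u|)%N by rewrite card_row_idx sum_u.
have [beta [beta_bij beta_rev]] := exists_rev_compl_bij pF cardF e_gt0 rows_gt0 n_eq.
exists (pair_square (t := t) (u := u) l0 l1 beta); split.
  exact: pair_square_multimagic.
apply: pair_square_consecutive => //.
by rewrite card_col_idx sum_u -expnM mulnC.
Qed.
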